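(* For every positive integer $r$, with $m=2^r$, the matrix $S_r$ is the incidence matrix of a $2$-$(m,m/2,m/2-1)$ block design; that is, the collection of blocks $\mathcal{J}_b=\{a:(S_r)_{a,b}=1\}$, $b=1,\dots,2^{r+1}-2$, is a $2$-$(m,m/2,m/2-1)$ block design on $\{1,\dots,m\}$.
   Context: Define $\{0,1\}$-matrices $S_r$ recursively. Let $S_1=I_2$. For $r\ge1$ let $F_r=I_{2^r-1}\otimes\begin{pmatrix}0&1\\1&0\end{pmatrix}$, and let $1_r$, $0_r$ denote the $2^r\times1$ all-ones and all-zeros column vectors. For $r\ge2$ set $S_r=\big(B_r^{(i)}\ B_r^{(ii)}\ B_r^{(iii)}\big)$ (horizontal concatenation) with $$B_r^{(i)}=\begin{pmatrix}1_{r-1}&0_{r-1}\\0_{r-1}&1_{r-1}\end{pmatrix},\quad B_r^{(ii)}=\begin{pmatrix}S_{r-1}\\S_{r-1}\end{pmatrix},\quad B_r^{(iii)}=\begin{pmatrix}S_{r-1}\\S_{r-1}F_{r-1}\end{pmatrix}.$$ $S_r$ is a $2^r\times(2^{r+1}-2)$ matrix. A $2$-$(m,l,\lambda)$ block design is a collection of $l$-element subsets (blocks) of $\{1,\dots,m\}$ such that every $2$-element subset of $\{1,\dots,m\}$ is contained in exactly $\lambda$ blocks; the incidence matrix of a sequence of subsets $\mathcal{J}_1,\dots,\mathcal{J}_n$ is the $m\times n$ matrix with $(a,b)$-entry $1$ if $a\in\mathcal{J}_b$ and $0$ otherwise. *)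

From mathcomp Require Import all_boot all_order all_algebra.
From mathcomp Require Import zify.
Set Implicit Arguments. Unset Strict Implicit. Unset Printing Implicit Defensive.
Import GRing.Theory.
Local Open Scope ring_scope.

Lemma S_rows_eq (k : nat) : (2 ^ k.+1 + 2 ^ k.+1 = 2 ^ k.+2)%N.
Proof. by rewrite addnn -mul2n -expnS. Qed.

Lemma S_cols_eq (k : nat) :
  (2 + (2 ^ k.+2 - 2) + (2 ^ k.+2 - 2) = 2 ^ k.+3 - 2)%N.
Proof.
have h : (4 <= 2 ^ k.+2)%N.
  by rewrite !expnS mulnA leq_pmulr // expn_gt0.
rewrite (expnS 2 k.+2); lia.
Qed.

(* F_r = I_{2^r - 1} (x) [[0,1],[1,0]], of size 2(2^r - 1) = 2^{r+1} - 2.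
   Here Fm k = F_{k+1}.  Kronecker product written out entrywise:
   with i = 2 i1 + i2, j = 2 j1 + j2 (i2, j2 in {0,1}), the entry is
   delta_{i1 j1} * P_{i2 j2} = [i/2 = j/2 and i <> j]. *)
Definition Fm (k : nat) : 'M[int]_(2 ^ k.+2 - 2) :=
  \matrix_(i, j) ((i./2 == j./2)%N && (i != j))%:R.

(* Sm k = S_{k+1}, a 2^{k+1} x (2^{k+2} - 2) matrix. *)
Fixpoint Sm (k : nat) : 'M[int]_(2 ^ k.+1, 2 ^ k.+2 - 2) :=
  match k return 'M[int]_(2 ^ k.+1, 2 ^ k.+2 - 2) with
  | 0 => castmx (erefl 2 : 2 = 2 ^ 1, erefl 2 : 2 = 2 ^ 2 - 2)%N (1%:M : 'M[int]_2)
  | k'.+1 =>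
      let Bi : 'M[int]_(2 ^ k'.+1 + 2 ^ k'.+1, 2) :=
        col_mx (row_mx (const_mx 1 : 'M[int]_(2 ^ k'.+1, 1)) (const_mx 0 : 'M[int]_(2 ^ k'.+1, 1)))
               (row_mx (const_mx 0 : 'M[int]_(2 ^ k'.+1, 1)) (const_mx 1 : 'M[int]_(2 ^ k'.+1, 1))) in
      let Bii := col_mx (Sm k') (Sm k') in
      let Biii := col_mx (Sm k') (Sm k' *m Fm k') in
      castmx (S_rows_eq k', S_cols_eq k') (row_mx (row_mx Bi Bii) Biii)
  end.

(* Smat r = S_r for r >= 1 (S 0 is a dummy value, never used). *)
Definition Smat (r : nat) : 'M[int]_(2 ^ r, 2 ^ r.+1 - 2) :=
  match r return 'M[int]_(2 ^ r, 2 ^ r.+1 - 2) with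
  | 0 => 0
  | k.+1 => Sm k
  end.

Definition incidence_matrix (m n : nat) (J : 'I_n -> {set 'I_m}) : 'M[int]_(m, n) :=
  \matrix_(a, b) (a \in J b)%:R.

(* A 2-(m,l,lambda) block design: a sequence of blocks (indexed by 'I_n,
   repetitions allowed), each an l-subset of {1..m}, with every 2-subset
   contained in exactly lambda blocks. *)
Definition is_2design (m l lambda n : nat) (J : 'I_n -> {set 'I_m}) : Prop :=
  (forall b, #|J b| = l) /\
  (forall x y : 'I_m, x != y -> #|[set b | (x \in J b) && (y \in J b)]| = lambda).

From mathcomp Require Import all_boot all_algebra zify.
Set Implicit Arguments. Unset Strict Implicit. Unset Printing Implicit Defensive.
Import GRing.Theory Num.Theory.
Local Open Scope ring_scope.

(* With h = 2^(r-1), J the all-ones matrix and F = F_r, the matrix S = S_r satisfies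
     S S^T = h I + (h - 1) J,    1^T S = h 1^T,    S F = J - S,
   the last identity saying that the columns 2q and 2q+1 are complementary.  All three
   survive the passage to S_(r+1) = (B^(i) B^(ii) B^(iii)), computed blockwise: F_(r+1) is
   block diagonal, so the bottom half of B^(iii) is J - S, and the cross terms
   S (J - S)^T = (2h - 1) J - S S^T cancel because each row of S has 2h - 1 ones (the
   diagonal of S S^T).  For a 0/1 matrix the column sums are the block sizes and the
   entries of S S^T count the blocks through two points. *)

Lemma mul_const_mx (R : pzSemiRingType) m n p (a b : R) :
  (const_mx a : 'M_(m, n)) *m (const_mx b : 'M_(n, p)) = const_mx (a * b *+ n).
Proof.
apply/matrixP => i j; rewrite !mxE (eq_bigr (fun _ => a * b)) => [|k _].
  by rewrite sumr_const card_ord.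
by rewrite !mxE.
Qed.

Lemma mul_const_col_mx (R : pzSemiRingType) p m1 m2 n (a : R)
    (A1 : 'M_(m1, n)) (A2 : 'M_(m2, n)) :
  (const_mx a : 'M_(p, m1 + m2)) *m col_mx A1 A2 = const_mx a *m A1 + const_mx a *m A2.
Proof. by rewrite -row_mx_const mul_row_col. Qed.

Lemma const_subr_row_mx (R : pzRingType) m n1 n2 (a : R)
    (A1 : 'M_(m, n1)) (A2 : 'M_(m, n2)) :
  const_mx a - row_mx A1 A2 = row_mx (const_mx a - A1) (const_mx a - A2).
Proof. by rewrite -[const_mx a in LHS]row_mx_const opp_row_mx add_row_mx. Qed.

Lemma const_subr_col_mx (R : pzRingType) m1 m2 n (a : R)
    (A1 : 'M_(m1, n)) (A2 : 'M_(m2, n)) :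
  const_mx a - col_mx A1 A2 = col_mx (const_mx a - A1) (const_mx a - A2).
Proof. by rewrite -[const_mx a in LHS]col_mx_const opp_col_mx add_col_mx. Qed.

Definition pair_swap_mx n : 'M[int]_n :=
  \matrix_(i, j) ((i./2 == j./2)%N && (i != j))%:R.

Lemma pair_swap_mx_block n1 n2 : ~~ odd n1 ->
  pair_swap_mx (n1 + n2) = block_mx (pair_swap_mx n1) 0 0 (pair_swap_mx n2).
Proof.
move=> n1_even; apply/matrixP => i j.
case: (split_ordP i) => {}i ->; case: (split_ordP j) => {}j ->;
rewrite ?block_mxEul ?block_mxEur ?block_mxEdl ?block_mxEdr !mxE -!val_eqE /=;
have := ltn_ord i; have := ltn_ord j => //.
- by move=> *; rewrite (_ : _ && _ = false) //; lia.
- by move=> *; rewrite (_ : _ && _ = false) //; lia.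
- by move=> *; congr (_%:R); lia.
Qed.

Lemma pair_swap_mx2 : pair_swap_mx (1 + 1) = block_mx 0 1%:M 1%:M 0.
Proof.
apply/matrixP => i j.
case: (split_ordP i) => {}i ->; case: (split_ordP j) => {}j ->;
by rewrite ?block_mxEul ?block_mxEur ?block_mxEdl ?block_mxEdr !mxE !ord1.
Qed.

Lemma const1_mul_pair_swap_mx m n : ~~ odd n ->
  (const_mx 1 : 'M_(m, n)) *m pair_swap_mx n = const_mx 1.
Proof.
move=> /negPf n_even; rewrite -[n]odd_double_half n_even add0n.
elim: n./2 => [|p IHp]; first by apply/matrixP => ? [].
rewrite doubleS -[p.*2.+2]/((1 + 1) + p.*2)%N pair_swap_mx_block //.
rewrite -[const_mx 1 in LHS]row_mx_const mul_row_block !mulmx0 add0r addr0 IHp.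
rewrite pair_swap_mx2 -[const_mx 1 in LHS]row_mx_const mul_row_block.
by rewrite !mulmx0 !mulmx1 add0r addr0 !row_mx_const.
Qed.

Definition binary_mx m n (A : 'M[int]_(m, n)) := forall i j, A i j = 0 \/ A i j = 1.

Lemma binary_indicator m n (A : 'M[int]_(m, n)) i j :
  binary_mx A -> (A i j == 1)%:R = A i j.
Proof. by case/(_ i j) => ->; rewrite ?eqxx // eq_sym oner_eq0. Qed.

Lemma binary0 m n : binary_mx (0 : 'M_(m, n)).
Proof. by move=> i j; rewrite mxE; left. Qed.

Lemma binary_const1 m n : binary_mx (const_mx 1 : 'M_(m, n)).
Proof. by move=> i j; rewrite mxE; right. Qed.

Lemma binary_row_mx m n1 n2 (A1 : 'M_(m, n1)) (A2 : 'M_(m, n2)) :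
  binary_mx A1 -> binary_mx A2 -> binary_mx (row_mx A1 A2).
Proof.
move=> bin1 bin2 i j.
by case: (split_ordP j) => {}j ->; rewrite ?row_mxEl ?row_mxEr.
Qed.

Lemma binary_col_mx m1 m2 n (A1 : 'M_(m1, n)) (A2 : 'M_(m2, n)) :
  binary_mx A1 -> binary_mx A2 -> binary_mx (col_mx A1 A2).
Proof.
move=> bin1 bin2 i j.
by case: (split_ordP i) => {}i ->; rewrite ?col_mxEu ?col_mxEd.
Qed.

Lemma binary_const1_subr m n (A : 'M_(m, n)) :
  binary_mx A -> binary_mx (const_mx 1 - A).
Proof.
move=> binA i j; rewrite !mxE.
by case: (binA i j) => ->; rewrite ?subr0 ?subrr; [right | left].
Qed.

Lemma card_binary_col m n (A : 'M[int]_(m, n)) j : binary_mx A ->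
  #|[set i | A i j == 1]|%:R = ((const_mx 1 : 'rV_m) *m A) 0 j.
Proof.
move=> binA; rewrite mxE -sum1_card big_mkcond natr_sum; apply: eq_bigr => i _.
by rewrite !mxE mul1r inE -[RHS](binary_indicator _ _ binA); case: (A i j == 1).
Qed.

Lemma card_binary_rows_meet m n (A : 'M[int]_(m, n)) i1 i2 : binary_mx A ->
  #|[set j | (A i1 j == 1) && (A i2 j == 1)]|%:R = (A *m A^T) i1 i2.
Proof.
move=> binA; rewrite mxE -sum1_card big_mkcond natr_sum; apply: eq_bigr => j _.
rewrite !mxE inE -(binary_indicator i1 j binA) -(binary_indicator i2 j binA).
by case: (A i1 j == 1); case: (A i2 j == 1); rewrite ?mulr1 ?mulr0.
Qed.

Lemma binary_row_sum m n p (A : 'M[int]_(m, n)) i j : binary_mx A ->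
  (A *m (const_mx 1 : 'M_(n, p))) i j = (A *m A^T) i i.
Proof.
move=> binA; rewrite !mxE; apply: eq_bigr => k _.
by rewrite !mxE mulr1; case: (binA i k) => ->; rewrite ?mulr0 ?mulr1.
Qed.

Record hadamard_incidence h m n (S : 'M[int]_(m, n)) : Prop := HadamardIncidence {
  hadamard_binary : binary_mx S;
  hadamard_mul_pair_swap : S *m pair_swap_mx n = const_mx 1 - S;
  hadamard_col_sum : (const_mx 1 : 'rV_m) *m S = const_mx h%:R;
  hadamard_gram : S *m S^T = h%:R%:M + const_mx (h%:R - 1) }.

Lemma hadamard_castmx h m n m' n' (e : (m = m') * (n = n')) (S : 'M_(m, n)) :
  hadamard_incidence h S -> hadamard_incidence h (castmx e S).
Proof. by case: e => em en; case: m' / em; case: n' / en; rewrite castmx_id. Qed.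

Lemma hadamard_identity : hadamard_incidence 1 (1%:M : 'M_2).
Proof.
split.
- by move=> i j; rewrite mxE; case: (i == j); [right | left].
- by rewrite mul1mx; apply/matrixP => -[[|[|//]] ?] [[|[|//]] ?]; rewrite !mxE.
- by rewrite mulmx1.
- by rewrite trmx1 mulmx1 subrr addr0.
Qed.

Definition halves_mx m : 'M[int]_(m + m, 1 + 1) :=
  col_mx (row_mx (const_mx 1) 0) (row_mx 0 (const_mx 1)).

Definition doubling_mx m n (S : 'M[int]_(m, n)) : 'M[int]_(m + m, 1 + 1 + n + n) :=
  row_mx (row_mx (halves_mx m) (col_mx S S)) (col_mx S (S *m pair_swap_mx n)).

Section Doubling.

Variables (h m n : nat) (S : 'M[int]_(m, n)).
Hypotheses (m_double : m = (h + h)%N) (n_double : (n + 2 = m + m)%N).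
Hypothesis hadS : hadamard_incidence h S.

Let binS := hadamard_binary hadS.
Let gramS := hadamard_gram hadS.
Let swapS := hadamard_mul_pair_swap hadS.

Let row_sum p : S *m (const_mx 1 : 'M_(n, p)) = const_mx (m%:R - 1).
Proof.
apply/matrixP => i j; rewrite binary_row_sum // gramS !mxE eqxx mulr1n; lia.
Qed.

Let const1_mul_trS p : (const_mx 1 : 'M_(p, n)) *m S^T = const_mx (m%:R - 1).
Proof. by apply: (can_inj (@trmxK _ _ _)); rewrite trmx_mul trmxK !trmx_const row_sum. Qed.

Lemma binary_doubling : binary_mx (doubling_mx S).
Proof.
rewrite /doubling_mx /halves_mx swapS.
by repeat first [ exact: binS | exact: binary0 | exact: binary_const1
                | apply: binary_const1_subr | apply: binary_row_mx | apply: binary_col_mx ].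
Qed.

Lemma doubling_mul_pair_swap :
  doubling_mx S *m pair_swap_mx (1 + 1 + n + n) = const_mx 1 - doubling_mx S.
Proof.
have n_even : ~~ odd n by lia.
rewrite pair_swap_mx_block; last lia.
rewrite pair_swap_mx_block //.
rewrite /doubling_mx !mul_row_block !mulmx0 !addr0 !add0r !mul_col_mx swapS.
rewrite mulmxBl const1_mul_pair_swap_mx // swapS subKr.
rewrite pair_swap_mx2 /halves_mx !mul_row_block !mulmx0 !mulmx1 !addr0 !add0r.
by rewrite !const_subr_row_mx !const_subr_col_mx !const_subr_row_mx !subrr !subr0 subKr.
Qed.

Lemma col_sum_doubling :
  (const_mx 1 : 'rV_(m + m)) *m doubling_mx S = const_mx m%:R.
Proof.
rewrite /doubling_mx swapS /halves_mx !mul_mx_row !mul_const_col_mx !mul_mx_row.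
rewrite !mulmx0 add_row_mx addr0 add0r mulmxBr (hadamard_col_sum hadS).
rewrite !mul_const_mx mulr1 [_ + (_ - _)]addrC subrK.
have -> : const_mx h%:R + const_mx h%:R = const_mx m%:R :> 'rV[int]_n.
  by apply/matrixP => i j; rewrite !mxE m_double natrD.
by rewrite !row_mx_const.
Qed.

Lemma gram_doubling :
  doubling_mx S *m (doubling_mx S)^T = m%:R%:M + const_mx (m%:R - 1).
Proof.
rewrite /doubling_mx swapS /halves_mx !tr_row_mx !tr_col_mx !tr_row_mx !trmx_const ?trmx0.
rewrite !mul_row_col !mul_col_row !mul_row_col !mulmx0 !mul0mx !addr0 !add0r.
rewrite linearB /= trmx_const !mulmxBr !mulmxBl !mul_const_mx row_sum const1_mul_trS gramS.
rewrite (scalar_mx_block m m) -block_mx_const !add_block_mx !mulr1.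
by congr block_mx; apply/matrixP => i j; rewrite !mxE;
  case: (i == j); rewrite ?mulr1n ?mulr0n; lia.
Qed.

Lemma hadamard_doubling : hadamard_incidence m (doubling_mx S).
Proof.
split; [exact: binary_doubling | exact: doubling_mul_pair_swap |
        exact: col_sum_doubling | exact: gram_doubling].
Qed.

End Doubling.

Lemma Sm_succ k : Sm k.+1 = castmx (S_rows_eq k, S_cols_eq k) (doubling_mx (Sm k)).
Proof. by []. Qed.

Lemma hadamard_Sm k : hadamard_incidence (2 ^ k) (Sm k).
Proof.
elim: k => [|k IHk]; first exact: hadamard_identity.
rewrite Sm_succ; apply/hadamard_castmx/(hadamard_doubling _ _ IHk).
  by rewrite expnS mul2n addnn.
have := expn_gt0 2 k; rewrite !expnS; lia.
Qed.

Local Close Scope ring_scope.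

Theorem proposition4p4 (r : nat) (hr : (0 < r)%N) :
  incidence_matrix (fun b => [set a | Smat r a b == 1%R]) = Smat r /\
  is_2design (2 ^ r %/ 2) (2 ^ r %/ 2 - 1) (fun b => [set a | Smat r a b == 1%R]).
Proof.
case: r hr => // k _ /=; have [binS _ colS gramS] := hadamard_Sm k.
have -> : 2 ^ k.+1 %/ 2 = 2 ^ k by rewrite expnS mulKn.
split; first by apply/matrixP => a b; rewrite !mxE inE binary_indicator.
split=> [b | x y x_neq_y]; apply/eqP; rewrite -(eqr_nat int).
  by rewrite card_binary_col // colS mxE.
under eq_finset => b do rewrite !inE.
rewrite card_binary_rows_meet // gramS !mxE (negbTE x_neq_y) mulr0n add0r.
by rewrite natrB ?expn_gt0.
Qed.
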